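(* Let $G$ be a graph whose vertex set is partitioned among agents $1,\dots,m$ (agent $i$ owning $V_i$), and let $M_1$ and $M_2$ be two matchings of $G$. Then there exist two matchings $N_1$ and $N_2$ of $G$ such that for every agent $i$: (1) $|u_i(N_1)-u_i(N_2)|\le 2$, and (2) $u_i(N_1)+u_i(N_2)=u_i(M_1)+u_i(M_2)$.
   Context: For a matching $M$ of $G$ and an agent $i$, $u_i(M)$ denotes the number of vertices of $V_i$ covered by $M$. *)

From mathcomp Require Import all_boot.
Set Implicit Arguments. Unset Strict Implicit. Unset Printing Implicit Defensive.

Section Matchings.
Variable T : finType.

Definition is_edge (adj : rel T) (E : {set T}) : Prop :=
  exists x y, x != y /\ adj x y /\ E = [set x; y].

Definition is_matching (adj : rel T) (M : {set {set T}}) : Prop :=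
  (forall E, E \in M -> is_edge adj E) /\
  (forall E F, E \in M -> F \in M -> E != F -> [disjoint E & F]).

Definition covered (M : {set {set T}}) (x : T) : bool := [exists E in M, x \in E].

(* u_i(M): number of vertices owned by agent i (V_i = owner^-1(i)) covered by M *)
Definition util (m : nat) (owner : T -> 'I_m) (i : 'I_m) (M : {set {set T}}) : nat :=
  #|[set x | (owner x == i) && covered M x]|.
End Matchings.

From mathcomp Require Import all_boot perm zify.
Set Implicit Arguments. Unset Strict Implicit. Unset Printing Implicit Defensive.

(* Call a vertex odd for (M1, M2) when exactly one of them covers it.  Only
   odd vertices make u_i(M1) and u_i(M2) differ, so if no agent owns three
   odd vertices, (M1, M2) itself is a solution.  Otherwise some agent owns
   odd vertices x covered by M1 and y covered by M2: if its odd vertices all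
   lie on the same side, exchanging M1 and M2 along the alternating path
   starting at one of them moves that vertex to the other side and moves at
   most one further odd vertex (the other end of the path).  Reattaching the
   M1-edge {x, x'} to {y, x'} then identifies x with y and strictly decreases
   the number of odd vertices, so induction applies; x is covered by neither
   side of the result, and reattaching {y, x'} back to x in whichever output
   contains it changes no utility since x and y have the same owner. *)

Section Redistribution.
Variable T : finType.
Implicit Types (adj : rel T) (M N : {set {set T}}) (E e : {set T}) (a b c v x y z : T).

(* Matchings of the complete graph on [T]: reattaching edges leaves the graph,
   so the induction runs on these and only the final step returns to [adj]. *)
Local Notation pairing := (is_matching (fun _ _ : T => true)).

Lemma coveredP M v : reflect (exists2 E, E \in M & v \in E) (covered M v).
Proof. by apply: (iffP existsP) => [[E /andP[]]|[E EM vE]]; exists E => //; rewrite EM. Qed.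

Lemma covered_mem M E v : E \in M -> v \in E -> covered M v.
Proof. by move=> EM vE; apply/coveredP; exists E. Qed.

Lemma matching_edge_eq adj M E F v :
  is_matching adj M -> E \in M -> F \in M -> v \in E -> v \in F -> E = F.
Proof.
move=> [_ disj] EM FM vE vF; apply/eqP/negPn/negP => /(disj _ _ EM FM).
by move/disjoint_setI0/setP/(_ v); rewrite !inE vE vF.
Qed.

Lemma matching_other_end adj M E x : is_matching adj M -> E \in M -> x \in E ->
  exists2 x', x' != x & E = [set x; x'].
Proof.
move=> [edges _] /edges[a [b [ab [_ ->]]]]; rewrite !inE => /orP[]/eqP->.
  by exists b; rewrite // eq_sym.
by exists a => //; rewrite setUC.
Qed.

Lemma matching_edge_neq adj M a b : is_matching adj M -> [set a; b] \in M -> a != b.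
Proof.
move=> [edges _] /edges[p [q [pq [_ e]]]]; apply: contraNneq pq => ab.
by move: (set21 p q) (set22 p q); rewrite -e ab setUid => /set1P-> /set1P->.
Qed.

Lemma covered_setU1 M e v : covered (e |: M) v = (v \in e) || covered M v.
Proof.
apply/coveredP/orP => [[E /setU1P[->|EM] vE]|[ve|/coveredP[E EM vE]]].
- by left.
- by right; apply/coveredP; exists E.
- by exists e; rewrite ?setU11.
- by exists E; rewrite ?setU1r.
Qed.

Lemma covered_setD1 adj M e v : is_matching adj M -> e \in M ->
  covered (M :\ e) v = (v \notin e) && covered M v.
Proof.
move=> hM eM; apply/coveredP/andP => [[E /setD1P[Ee EM] vE]|[ve /coveredP[E EM vE]]].
  split; last by apply/coveredP; exists E.
  by apply: contra Ee => ve; rewrite (matching_edge_eq hM EM eM vE ve).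
by exists E => //; apply/setD1P; split=> //; apply: contraNneq ve => <-.
Qed.

Lemma covered_count adj M v : is_matching adj M ->
  (covered M v : nat) = \sum_(E : {set T} | v \in E) (E \in M).
Proof.
move=> hM; have [[E0 E0M vE0]|uncov] := coveredP M v.
  rewrite (bigD1 E0) //= E0M big1 // => E /andP[vE EE0].
  by apply/eqP; rewrite eqb0; apply: contra EE0 => EM; rewrite (matching_edge_eq hM EM E0M vE vE0).
by rewrite big1 // => E vE; apply/eqP; rewrite eqb0; apply/negP => EM; apply: uncov; exists E.
Qed.

Lemma matching_setD1 adj M e : is_matching adj M -> is_matching adj (M :\ e).
Proof.
move=> [edges disj]; split=> [E /setD1P[_ /edges]//|E F /setD1P[_ EM] /setD1P[_ FM]].
exact: disj.
Qed.

Lemma matching_setU1 adj M e : is_matching adj M -> is_edge adj e ->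
  (forall v, v \in e -> ~~ covered M v) -> is_matching adj (e |: M).
Proof.
move=> [edges disj] he free.
have eF F : F \in M -> [disjoint e & F].
  move=> FM; apply/pred0P => v /=; apply/negbTE/andP => [[ve vF]].
  by move/negP: (free v ve); apply; apply/coveredP; exists F.
split=> [E /setU1P[->|/edges]//|E F /setU1P[->|EM] /setU1P[->|FM]].
- by rewrite eqxx.
- by move=> _; apply: eF.
- by move=> _; rewrite disjoint_sym; apply: eF.
- exact: disj.
Qed.

Lemma matching_pairing adj M : is_matching adj M -> pairing M.
Proof. by move=> [edges disj]; split=> // E /edges[a [b [ab [_ ->]]]]; exists a, b. Qed.

Definition redistributes N1 N2 M1 M2 :=
  forall E, (E \in N1) + (E \in N2) = (E \in M1) + (E \in M2).

Lemma redistributesC N1 N2 M1 M2 :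
  redistributes N1 N2 M1 M2 -> redistributes N2 N1 M1 M2.
Proof. by move=> hr E; rewrite addnC hr. Qed.

Lemma redistributes_sym N1 N2 M1 M2 :
  redistributes N1 N2 M1 M2 -> redistributes N2 N1 M2 M1.
Proof. by move=> hr E; rewrite addnC hr addnC. Qed.

Lemma redistributes_trans N1 N2 A1 A2 M1 M2 :
  redistributes N1 N2 A1 A2 -> redistributes A1 A2 M1 M2 -> redistributes N1 N2 M1 M2.
Proof. by move=> hN hA E; rewrite hN hA. Qed.

Lemma redistributes_setU1 N1 N2 M1 M2 e :
  redistributes N1 N2 (M1 :\ e) M2 -> e \in M1 -> e \notin M2 ->
  redistributes N1 (e |: N2) M1 M2.
Proof.
move=> hr eM1 eM2 E; have := hr E; rewrite !inE.
case: (eqVneq E e) => [->|_] //=; rewrite eM1 (negbTE eM2).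
by case: (e \in N1); case: (e \in N2).
Qed.

Lemma covered_redistributes adj N1 N2 M1 M2 v :
  is_matching adj N1 -> is_matching adj N2 -> is_matching adj M1 -> is_matching adj M2 ->
  redistributes N1 N2 M1 M2 ->
  covered N1 v + covered N2 v = covered M1 v + covered M2 v.
Proof.
move=> hN1 hN2 hM1 hM2 hr.
by rewrite !(covered_count (adj := adj) v) // -!big_split; apply: eq_bigr => E _; apply: hr.
Qed.

Lemma redistributes_matching adj N1 N2 M1 M2 :
  is_matching adj M1 -> is_matching adj M2 -> pairing N1 -> pairing N2 ->
  redistributes N1 N2 M1 M2 -> is_matching adj N1 /\ is_matching adj N2.
Proof.
move=> [edges1 _] [edges2 _] [_ disj1] [_ disj2] hr.
have edgeN E : (E \in N1) || (E \in N2) -> is_edge adj E.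
  move=> EN; have := hr E.
  case EM1: (E \in M1); first by move=> _; apply: edges1.
  case EM2: (E \in M2); first by move=> _; apply: edges2.
  by move: EN; case: (E \in N1); case: (E \in N2).
by split; split=> // E EN; apply: edgeN; rewrite EN ?orbT.
Qed.

(* Swapping the edges of (M1, M2) along the alternating path starting at [x]
   and ending at [z] changes the coverage exactly at [x] and [z]. *)
Definition exchanges_at x z N1 N2 M1 M2 := forall v,
  covered N1 v = (if (v == x) || (v == z) then covered M2 v else covered M1 v) /\
  covered N2 v = (if (v == x) || (v == z) then covered M1 v else covered M2 v).

Lemma exchanges_at_refl x M1 M2 :
  covered M1 x = covered M2 x -> exchanges_at x x M1 M2 M1 M2.
Proof. by move=> eqx v; rewrite orbb; case: eqP => [->|]. Qed.

Lemma exchanges_at_sym x z N1 N2 M1 M2 :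
  exchanges_at x z N1 N2 M1 M2 -> exchanges_at x z N2 N1 M2 M1.
Proof. by move=> hx v; have [] := hx v. Qed.

Definition covered_once M1 M2 := [set v | covered M1 v != covered M2 v].

Lemma covered_onceC M1 M2 : covered_once M1 M2 = covered_once M2 M1.
Proof. by apply/setP => v; rewrite !inE eq_sym. Qed.

Lemma covered_once_exchanges x z N1 N2 M1 M2 :
  exchanges_at x z N1 N2 M1 M2 -> covered_once N1 N2 = covered_once M1 M2.
Proof.
move=> hx; apply/setP => v; rewrite !inE; have [-> ->] := hx v.
by case: ifP => // _; rewrite eq_sym.
Qed.

Lemma exchanges_at_setU1 adj N1 N2 M1 M2 x x' z :
  is_matching adj M1 -> is_matching adj N2 -> [set x; x'] \in M1 -> x' != x ->
  ~~ covered M2 x -> covered M2 x' || (z == x') ->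
  redistributes N1 N2 (M1 :\ [set x; x']) M2 ->
  exchanges_at x' z N1 N2 (M1 :\ [set x; x']) M2 ->
  [/\ is_matching adj ([set x; x'] |: N2), redistributes N1 ([set x; x'] |: N2) M1 M2
    & exchanges_at x z N1 ([set x; x'] |: N2) M1 M2].
Proof.
move=> hM1 hN2 eM1 x'x n2x zx' hr hx.
have c1x := covered_mem eM1 (set21 x x').
have c1x' := covered_mem eM1 (set22 x x').
have hv v : covered N1 v = (if (v == x') || (v == z) then covered M2 v
                            else (v \notin [set x; x']) && covered M1 v) /\
            covered N2 v = (if (v == x') || (v == z) then (v \notin [set x; x']) && covered M1 v
                            else covered M2 v).
  by rewrite -!(covered_setD1 _ hM1 eM1); apply: hx.
have eM2 : [set x; x'] \notin M2.
  by apply: contra n2x => eM2; apply: covered_mem eM2 (set21 x x').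
split; last 1 first.
- move=> v; rewrite covered_setU1; have [-> ->] := hv v; rewrite !inE.
  case: (eqVneq v x) => [->|vx]; first by rewrite /= (negbTE n2x) c1x; case: ifP.
  case: (eqVneq v x') => [->|vx'] /=; last by case: (v == z).
  by move: zx'; rewrite [z == x']eq_sym c1x'; case: (x' == z); case: (covered M2 x').
- apply: matching_setU1 => //; first exact: hM1.1 _ eM1.
  move=> v; rewrite !inE => /orP[]/eqP->; [case: (hv x) | case: (hv x')] => _ ->.
    by rewrite !inE eqxx /=; case: ifP.
  by rewrite !inE eqxx orbT.
- exact: redistributes_setU1.
Qed.

Lemma alternating_exchange adj M1 M2 x :
  is_matching adj M1 -> is_matching adj M2 -> x \in covered_once M1 M2 ->
  exists N1 N2 z, [/\ is_matching adj N1, is_matching adj N2,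
    redistributes N1 N2 M1 M2 & exchanges_at x z N1 N2 M1 M2].
Proof.
move Hn: (#|M1| + #|M2|) => n; elim/ltn_ind: n M1 M2 x Hn => n IH M1 M2 x Hn h1 h2 hx.
wlog c1x : M1 M2 Hn h1 h2 hx / covered M1 x => [sym|].
  case: (boolP (covered M1 x)) => [|n1x]; first exact: sym.
  have [||N1 [N2 [z [hN1 hN2 hr hex]]]] := sym M2 M1 (etrans (addnC _ _) Hn) h2 h1.
  - by rewrite covered_onceC.
  - by move: hx; rewrite inE (negbTE n1x); case: (covered M2 x).
  by exists N2, N1, z; split=> //; [exact: redistributes_sym | exact: exchanges_at_sym].
have n2x : ~~ covered M2 x by move: hx; rewrite inE c1x; case: (covered M2 x).
have /coveredP[E EM1 xE] := c1x.
have [x' x'x eE] := matching_other_end h1 EM1 xE; subst E.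
have c1x' := covered_mem EM1 (set22 x x').
have [N1 [N2 [z [hN1 hN2 hr hex zx']]]] : exists N1 N2 z,
    [/\ is_matching adj N1, is_matching adj N2, redistributes N1 N2 (M1 :\ [set x; x']) M2,
        exchanges_at x' z N1 N2 (M1 :\ [set x; x']) M2 & covered M2 x' || (z == x')].
  (* The path either stops at x' or continues along the M2-edge at x'. *)
  case c2x': (covered M2 x'); last first.
    exists (M1 :\ [set x; x']), M2, x'; split; rewrite ?eqxx ?orbT //.
    - exact: matching_setD1.
    - apply: exchanges_at_refl.
      by rewrite (covered_setD1 _ h1 EM1) c2x' !inE eqxx orbT.
  have [||N1 [N2 [z [hN1 hN2 hr hex]]]] :=
    IH _ _ (M1 :\ [set x; x']) M2 x' erefl (matching_setD1 _ h1) h2.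
  - by rewrite -Hn ltn_add2r (cardsD1 [set x; x'] M1) EM1.
  - by rewrite inE (covered_setD1 _ h1 EM1) c2x' !inE eqxx orbT.
  by exists N1, N2, z.
have [hN2' hr' hex'] := exchanges_at_setU1 h1 hN2 EM1 x'x n2x zx' hr hex.
by exists N1, ([set x; x'] |: N2), z.
Qed.

Definition reattach N a b c := [set c; a] |: (N :\ [set b; a]).

Section Reattach.
Variables (adj : rel T) (N : {set {set T}}) (a b c : T).
Hypotheses (hN : is_matching adj N) (baN : [set b; a] \in N) (nc : ~~ covered N c).

Let ca : c != a. Proof. by apply: contraNneq nc => ->; apply: covered_mem baN (set22 b a). Qed.
Let cb : c != b. Proof. by apply: contraNneq nc => ->; apply: covered_mem baN (set21 b a). Qed.

Lemma reattach_matching : adj c a -> is_matching adj (reattach N a b c).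
Proof.
move=> adjca; apply: matching_setU1; first exact: matching_setD1.
  by exists c, a.
move=> v; rewrite (covered_setD1 _ hN baN) !inE => /orP[]/eqP->.
  by rewrite (negbTE nc) andbF.
by rewrite eqxx orbT.
Qed.

Lemma covered_reattach v : covered (reattach N a b c) v = covered N (tperm b c v).
Proof.
rewrite covered_setU1 (covered_setD1 _ hN baN) !inE.
case: tpermP => [->|->|/eqP vb /eqP vc].
- by rewrite eqxx eq_sym (negbTE cb) (negbTE (matching_edge_neq hN baN)) (negbTE nc).
- by rewrite eqxx (covered_mem baN (set21 b a)).
- rewrite (negbTE vb) (negbTE vc) /=.
  by case: eqVneq => [->|_] //; rewrite (covered_mem baN (set22 b a)).
Qed.

End Reattach.

Lemma reattachK N a b c : [set b; a] \in N -> [set c; a] \notin N ->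
  reattach (reattach N a b c) a c b = N.
Proof.
move=> baN caN; apply/setP => E; rewrite !inE.
case: eqVneq => [->|_] /=; first by rewrite baN.
by case: eqVneq => [->|_] //=; rewrite (negbTE caN).
Qed.

Lemma redistributes_reattach N1 N2 M1 M2 a b c :
  redistributes N1 N2 M1 M2 -> [set b; a] \in N1 -> [set b; a] \in M1 ->
  [set c; a] \notin N2 -> [set c; a] \notin M2 ->
  redistributes (reattach N1 a b c) N2 (reattach M1 a b c) M2.
Proof.
move=> hr baN baM caN caM E; rewrite !inE.
case: (eqVneq E [set c; a]) => [->|_] /=; first by rewrite (negbTE caN) (negbTE caM).
case: (eqVneq E [set b; a]) => [->|_] /=; last exact: hr.
by have := hr [set b; a]; rewrite baN baM => /eqP; rewrite eqn_add2l => /eqP.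
Qed.

Variables (m : nat) (owner : T -> 'I_m).

Definition agent_covered_once i M1 M2 := [set v in covered_once M1 M2 | owner v == i].

Definition balanced N1 N2 := forall i,
  util owner i N1 <= util owner i N2 + 2 /\ util owner i N2 <= util owner i N1 + 2.

Lemma util_sum i N : util owner i N = \sum_(v | owner v == i) (covered N v : nat).
Proof.
rewrite /util -sum1_card (eq_bigl (fun v => (owner v == i) && covered N v)) => [|v].
  by rewrite big_mkcondr; apply: eq_bigr => v _; case: (covered N v).
by rewrite inE.
Qed.

Lemma util_redistributes i N1 N2 M1 M2 :
  pairing N1 -> pairing N2 -> pairing M1 -> pairing M2 -> redistributes N1 N2 M1 M2 ->
  util owner i N1 + util owner i N2 = util owner i M1 + util owner i M2.
Proof.
move=> hN1 hN2 hM1 hM2 hr; rewrite !util_sum -!big_split.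
by apply: eq_bigr => v _; exact: covered_redistributes hN1 hN2 hM1 hM2 hr.
Qed.

Lemma util_tperm i N N' x y : owner x = owner y ->
  (forall v, covered N v = covered N' (tperm x y v)) -> util owner i N = util owner i N'.
Proof.
move=> oxy hc; rewrite /util -[RHS](card_preimset _ (@perm_inj _ (tperm x y))).
apply: eq_card => v; rewrite !inE hc; congr (_ && _).
by case: tpermP => [->|->|]; rewrite ?oxy.
Qed.

Lemma util_le_agent_covered_once i M1 M2 :
  util owner i M1 <= util owner i M2 + #|agent_covered_once i M1 M2|.
Proof.
apply: leq_trans (leq_card_setU _ _); apply: subset_leq_card.
apply/subsetP => v; rewrite !inE => /andP[-> c1v]; rewrite c1v andbT.
by case: (covered M2 v).
Qed.

Lemma balanced_of_agent_covered_once M1 M2 :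
  (forall i, #|agent_covered_once i M1 M2| <= 2) -> balanced M1 M2.
Proof.
move=> few i; split.
  by apply: leq_trans (util_le_agent_covered_once i M1 M2) _; rewrite leq_add2l few.
apply: leq_trans (util_le_agent_covered_once i M2 M1) _.
by rewrite leq_add2l /agent_covered_once covered_onceC few.
Qed.

Lemma opposite_pair M1 M2 a b :
  a \in covered_once M1 M2 -> b \in covered_once M1 M2 -> owner a = owner b ->
  covered M1 a != covered M1 b ->
  exists x y, [/\ owner x = owner y, covered M1 x, ~~ covered M2 x, covered M2 y & ~~ covered M1 y].
Proof.
rewrite !inE => ha hb oab; case ca: (covered M1 a); case cb: (covered M1 b) => // _.
  by exists a, b; move: ha hb; rewrite ca cb; case: (covered M2 a); case: (covered M2 b).
by exists b, a; move: ha hb; rewrite ca cb; case: (covered M2 a); case: (covered M2 b).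
Qed.

Section Contraction.
Variables (M1 M2 : {set {set T}}) (x x' y : T).
Hypotheses (h1 : pairing M1) (h2 : pairing M2) (eM1 : [set x; x'] \in M1)
  (n2x : ~~ covered M2 x) (c2y : covered M2 y) (n1y : ~~ covered M1 y).

Lemma contract_pairing : pairing (reattach M1 x' x y).
Proof. exact: reattach_matching. Qed.

Lemma covered_once_contract :
  #|covered_once (reattach M1 x' x y) M2| < #|covered_once M1 M2|.
Proof.
have c1x := covered_mem eM1 (set21 x x').
have x_once : x \in covered_once M1 M2 by rewrite inE c1x (negbTE n2x).
rewrite (cardsD1 x (covered_once M1 M2)) x_once add1n ltnS.
apply: subset_leq_card; apply/subsetP => v; rewrite !inE (covered_reattach h1 eM1 n1y).
case: tpermP => [->|->|/eqP vx _]; last by rewrite vx.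
  by rewrite (negbTE n1y) (negbTE n2x).
by rewrite c2y c1x.
Qed.

Lemma redistributes_uncontract N1' N2' :
  pairing N1' -> pairing N2' -> owner x = owner y ->
  redistributes N1' N2' (reattach M1 x' x y) M2 ->
  exists N1 N2, [/\ pairing N1, pairing N2, redistributes N1 N2 M1 M2 &
    forall i, util owner i N1 = util owner i N1' /\ util owner i N2 = util owner i N2'].
Proof.
move=> hN1 hN2 oxy hr.
have yM1 : [set y; x'] \notin M1 by apply: contra n1y => yM1; apply: covered_mem yM1 (set21 y x').
have free_x : ~~ covered N1' x && ~~ covered N2' x.
  have := covered_redistributes x hN1 hN2 contract_pairing h2 hr.
  rewrite (covered_reattach h1 eM1 n1y) tpermL (negbTE n1y) (negbTE n2x).
  by case: (covered N1' x); case: (covered N2' x).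
wlog yN1 : N1' N2' hN1 hN2 hr free_x / [set y; x'] \in N1' => [sym|].
  case yN1: ([set y; x'] \in N1'); first exact: sym.
  have yN2 : [set y; x'] \in N2' by move: (hr [set y; x']); rewrite yN1 setU11; case: (_ \in N2').
  have [||N1 [N2 [hN1' hN2' hr' hu]]] := sym N2' N1' hN2 hN1 (redistributesC hr).
  - by rewrite andbC.
  - exact: yN2.
  by exists N2, N1; split=> // [|i]; [exact: redistributesC | have [] := hu i].
have /andP[xN1 xN2] := free_x.
have xxN2 : [set x; x'] \notin N2' by apply: contra xN2 => xN2; apply: covered_mem xN2 (set21 x x').
have xxM2 : [set x; x'] \notin M2 by apply: contra n2x => xM2; apply: covered_mem xM2 (set21 x x').
exists (reattach N1' x' y x), N2'; split=> //.
- exact: reattach_matching.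
- rewrite -(reattachK eM1 yM1); apply: redistributes_reattach => //.
  exact: setU11.
- move=> i; split=> //; apply: util_tperm (esym oxy) _ => v.
  exact: (covered_reattach hN1 yN1 xN1).
Qed.

End Contraction.

Lemma crowded_agent_opposite_pair i M1 M2 : pairing M1 -> pairing M2 ->
  2 < #|agent_covered_once i M1 M2| ->
  exists A1 A2 x y, [/\ pairing A1, pairing A2, redistributes A1 A2 M1 M2,
    covered_once A1 A2 = covered_once M1 M2 &
    [/\ owner x = owner y, covered A1 x, ~~ covered A2 x, covered A2 y & ~~ covered A1 y]].
Proof.
set S := agent_covered_once i M1 M2 => h1 h2 crowded.
have inS v : v \in S -> v \in covered_once M1 M2 /\ owner v = i.
  by rewrite inE => /andP[? /eqP].
have [w wS] : exists w, w \in S by apply/card_gt0P; exact: leq_ltn_trans (leq0n 2) crowded.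
have [w_once ow] := inS w wS.
case: (boolP [exists a in S, covered M1 a != covered M1 w]) => [/exists_inP[a aS aw]|].
  have [a_once oa] := inS a aS.
  have [x [y hxy]] := opposite_pair a_once w_once (etrans oa (esym ow)) aw.
  by exists M1, M2, x, y; split.
move/exists_inPn => same.
have [N1 [N2 [z [hN1 hN2 hr hex]]]] := alternating_exchange h1 h2 w_once.
have [a] : exists a, a \in S :\ w :\ z.
  apply/card_gt0P; move: crowded; rewrite (cardsD1 w S) (cardsD1 z (S :\ w)); lia.
move=> /setD1P[az /setD1P[aw aS]]; have [a_once oa] := inS a aS.
have flip_w : covered N1 w = covered M2 w by have [-> _] := hex w; rewrite eqxx.
have keep_a : covered N1 a = covered M1 a by have [-> _] := hex a; rewrite (negbTE az) (negbTE aw).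
have [x [y hxy]] : exists x y, [/\ owner x = owner y, covered N1 x, ~~ covered N2 x,
    covered N2 y & ~~ covered N1 y].
  apply: (@opposite_pair _ _ a w); rewrite ?(covered_once_exchanges hex) //.
    by rewrite oa ow.
  rewrite keep_a flip_w; move/negPn/eqP: (same a aS) => ->.
  by rewrite inE in w_once.
by exists N1, N2, x, y; split; rewrite ?(covered_once_exchanges hex).
Qed.

Lemma balanced_redistribution M1 M2 : pairing M1 -> pairing M2 ->
  exists N1 N2, [/\ pairing N1, pairing N2, redistributes N1 N2 M1 M2 & balanced N1 N2].
Proof.
move Hn: #|covered_once M1 M2| => n; elim/ltn_ind: n M1 M2 Hn => n IH M1 M2 Hn h1 h2.
case: (boolP [exists i, 2 < #|agent_covered_once i M1 M2|]) => [/existsP[i crowded]|calm].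
  have [A1 [A2 [x [y [hA1 hA2 hrA onceA [oxy c1x n2x c2y n1y]]]]]] :=
    crowded_agent_opposite_pair h1 h2 crowded.
  have /coveredP[E EA1 xE] := c1x.
  have [x' _ eE] := matching_other_end hA1 EA1 xE; subst E.
  have [|N1' [N2' [hN1' hN2' hr' bal']]] :=
    IH _ _ _ _ erefl (contract_pairing hA1 EA1 n1y) hA2.
    by rewrite -Hn -onceA; apply: covered_once_contract.
  have [N1 [N2 [hN1 hN2 hr hu]]] := redistributes_uncontract hA1 hA2 EA1 n2x n1y hN1' hN2' oxy hr'.
  exists N1, N2; split=> //; first exact: redistributes_trans hr hrA.
  by move=> j; have [-> ->] := hu j; apply: bal'.
exists M1, M2; split=> //; apply: balanced_of_agent_covered_once => i.
by rewrite leqNgt; apply: contra calm => crowded; apply/existsP; exists i.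
Qed.

End Redistribution.

Theorem lemma1 (T : finType) (adj : rel T) (m : nat) (owner : T -> 'I_m)
  (M1 M2 : {set {set T}}) :
  is_matching adj M1 -> is_matching adj M2 ->
  exists N1 N2 : {set {set T}},
    is_matching adj N1 /\ is_matching adj N2 /\
    forall i : 'I_m,
      (util owner i N1 <= util owner i N2 + 2 /\ util owner i N2 <= util owner i N1 + 2) /\
      util owner i N1 + util owner i N2 = util owner i M1 + util owner i M2.
Proof.
move=> hM1 hM2.
have p1 := matching_pairing hM1; have p2 := matching_pairing hM2.
have [N1 [N2 [hN1 hN2 hr bal]]] := balanced_redistribution owner p1 p2.
have [aN1 aN2] := redistributes_matching hM1 hM2 hN1 hN2 hr.
exists N1, N2; do 2!split=> //; move=> i; split; first exact: bal.
exact: util_redistributes hN1 hN2 p1 p2 hr.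
Qed.
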